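(* Let $k$ be a field and $(\mathfrak{n},\{\,,\})$ a Lie algebra over $k$ which is a direct vector space sum $\mathfrak{n}=\mathfrak{a}\oplus\mathfrak{b}$ of two subalgebras $\mathfrak{a},\mathfrak{b}$. Define a bracket on the underlying space by $[a+b,a'+b']=\{a,a'\}-\{b,b'\}$ for $a,a'\in\mathfrak{a}$, $b,b'\in\mathfrak{b}$. Then $\mathfrak{g}=(\mathfrak{a}\oplus\mathfrak{b},[\,,])$ is a Lie algebra, and the product $(a+b)\cdot(a'+b')=-\{b,a'+b'\}$ is a post-Lie algebra structure on $(\mathfrak{g},\mathfrak{n})$.
   Context: A post-Lie algebra structure on a pair of Lie algebras $\mathfrak{g}=(V,[\,,])$, $\mathfrak{n}=(V,\{\,,\})$ on the same vector space $V$ is a bilinear product $x\cdot y$ on $V$ satisfying, for all $x,y,z\in V$: (1) $x\cdot y-y\cdot x=[x,y]-\{x,y\}$; (2) $[x,y]\cdot z=x\cdot(y\cdot z)-y\cdot(x\cdot z)$; (3) $x\cdot\{y,z\}=\{x\cdot y,z\}+\{y,x\cdot z\}$. *)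

From HB Require Import structures.
From mathcomp Require Import all_boot all_order all_algebra.
Set Implicit Arguments. Unset Strict Implicit. Unset Printing Implicit Defensive.
Import GRing.Theory.
Local Open Scope ring_scope.

Definition bilinear_op (k : fieldType) (V : lmodType k) (op : V -> V -> V) : Prop :=
  (forall (c : k) (x y z : V), op (c *: x + y) z = c *: op x z + op y z) /\
  (forall (c : k) (x y z : V), op x (c *: y + z) = c *: op x y + op x z).

Definition is_lie_bracket (k : fieldType) (V : lmodType k) (br : V -> V -> V) : Prop :=
  [/\ bilinear_op br,
      (forall x : V, br x x = 0) &
      (forall x y z : V, br x (br y z) + br y (br z x) + br z (br x y) = 0)].

Definition is_subalgebra (k : fieldType) (V : lmodType k) (br : V -> V -> V)
  (A : {pred V}) : Prop :=
  [/\ (0 : V) \in A,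
      (forall (c : k) (u v : V), u \in A -> v \in A -> c *: u + v \in A) &
      (forall u v : V, u \in A -> v \in A -> br u v \in A)].

Definition is_direct_sum (k : fieldType) (V : lmodType k) (A B : {pred V}) : Prop :=
  (forall v : V, exists a b : V, [/\ a \in A, b \in B & v = a + b]) /\
  (forall v : V, v \in A -> v \in B -> v = 0).

Definition is_post_lie (k : fieldType) (V : lmodType k)
  (gbr nbr dot : V -> V -> V) : Prop :=
  [/\ bilinear_op dot,
      (forall x y : V, dot x y - dot y x = gbr x y - nbr x y),
      (forall x y z : V, dot (gbr x y) z = dot x (dot y z) - dot y (dot x z)) &
      (forall x y z : V, dot x (nbr y z) = nbr (dot x y) z + nbr y (dot x z))].

From mathcomp Require Import all_boot all_order all_algebra.
Import GRing.Theory.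
Local Open Scope ring_scope.

(* Writing [x = a + b] with [a] in [A] and [b] in [B], the bracket [[ , ]] is
   the product bracket of [A] with [B]^op, so it is a Lie bracket, and
   [x . y = - {b, y}] is [- ad b].  Axiom (3) is then the Jacobi identity
   saying that [ad b] is a derivation of [{ , }]; axiom (2) holds because the
   [B]-component of [[x, y]] is [- {b, b'}] and [ad {b, b'} = [ad b, ad b']];
   axiom (1) is a direct expansion of both sides. *)

Set Implicit Arguments.
Unset Strict Implicit.

Section Bilinear.

Variables (k : fieldType) (V : lmodType k) (op : V -> V -> V).
Hypothesis op_bilin : bilinear_op op.

Lemma opDl x y z : op (x + y) z = op x z + op y z.
Proof. by case: op_bilin => opl _; rewrite -[x]scale1r opl !scale1r. Qed.

Lemma opDr x y z : op z (x + y) = op z x + op z y.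
Proof. by case: op_bilin => _ opr; rewrite -[x]scale1r opr !scale1r. Qed.

Lemma op0l z : op 0 z = 0.
Proof. by apply: (@addrI _ (op 0 z)); rewrite -opDl !addr0. Qed.

Lemma op0r z : op z 0 = 0.
Proof. by apply: (@addrI _ (op z 0)); rewrite -opDr !addr0. Qed.

Lemma opZl c x z : op (c *: x) z = c *: op x z.
Proof. by case: op_bilin => opl _; rewrite -[c *: x]addr0 opl op0l addr0. Qed.

Lemma opZr c x z : op z (c *: x) = c *: op z x.
Proof. by case: op_bilin => _ opr; rewrite -[c *: x]addr0 opr op0r addr0. Qed.

Lemma opNl x z : op (- x) z = - op x z.
Proof. by rewrite -scaleN1r opZl scaleN1r. Qed.

Lemma opNr x z : op z (- x) = - op z x.
Proof. by rewrite -scaleN1r opZr scaleN1r. Qed.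

End Bilinear.

Section LieBracket.

Variables (k : fieldType) (V : lmodType k) (br : V -> V -> V).
Hypothesis br_lie : is_lie_bracket br.

Let br_bilin : bilinear_op br. Proof. by case: br_lie. Qed.

Lemma lie_anticomm x y : br y x = - br x y.
Proof.
case: br_lie => _ br_alt _; have := br_alt (x + y).
rewrite (opDl br_bilin) !(opDr br_bilin) !br_alt add0r addr0 => /eqP.
by rewrite addrC addr_eq0 => /eqP.
Qed.

Lemma lie_derivation x y z :
  br x (br y z) = br (br x y) z + br y (br x z).
Proof.
case: br_lie => _ _ jacobi; have := jacobi x y z.
rewrite (lie_anticomm x z) (opNr br_bilin) (lie_anticomm (br x y) z).
by move/eqP; rewrite -addrA -opprD subr_eq0 addrC => /eqP.
Qed.

Lemma lie_ad_bracket x y z :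
  br (br x y) z = br x (br y z) - br y (br x z).
Proof. by rewrite lie_derivation addrK. Qed.

End LieBracket.

Lemma subalgebraN (k : fieldType) (V : lmodType k) (br : V -> V -> V)
    (A : {pred V}) :
  is_subalgebra br A -> forall v, v \in A -> - v \in A.
Proof. by case=> A0 Alin _ v Av; rewrite -scaleN1r -[_ *: v]addr0 Alin. Qed.

Section SplitLieAlgebra.

Variables (k : fieldType) (V : lmodType k) (nbr : V -> V -> V) (A B : {pred V}).
Variables (gbr dot : V -> V -> V).

Hypothesis nbr_lie : is_lie_bracket nbr.
Hypothesis A_sub : is_subalgebra nbr A.
Hypothesis B_sub : is_subalgebra nbr B.
(* Only [V = A + B] is needed: the defining equations of [gbr] and [dot]
   are assumed for every decomposition, which already forces them to be
   well defined. *)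
Hypothesis AB_span : forall v, exists a b, [/\ a \in A, b \in B & v = a + b].
Hypothesis gbrE : forall a a' b b', a \in A -> a' \in A -> b \in B -> b' \in B ->
  gbr (a + b) (a' + b') = nbr a a' - nbr b b'.
Hypothesis dotE : forall a a' b b', a \in A -> a' \in A -> b \in B -> b' \in B ->
  dot (a + b) (a' + b') = - nbr b (a' + b').

Let nbr_bilin : bilinear_op nbr. Proof. by case: nbr_lie. Qed.

Let A_comb c a a' : a \in A -> a' \in A -> c *: a + a' \in A.
Proof. by case: A_sub => _ Alin _; apply: Alin. Qed.

Let B_comb c b b' : b \in B -> b' \in B -> c *: b + b' \in B.
Proof. by case: B_sub => _ Blin _; apply: Blin. Qed.

Lemma dot_decl a b y : a \in A -> b \in B -> dot (a + b) y = - nbr b y.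
Proof. by move=> Aa Bb; have [a' [b' [Aa' Bb' ->]]] := AB_span y; apply: dotE. Qed.

Lemma gbr_bilinear : bilinear_op gbr.
Proof.
split=> c x y z.
- have [a1 [b1 [A1 B1 ->]]] := AB_span x.
  have [a2 [b2 [A2 B2 ->]]] := AB_span y.
  have [a3 [b3 [A3 B3 ->]]] := AB_span z.
  rewrite scalerDr addrACA !gbrE ?A_comb ?B_comb //.
  by rewrite !(opDl nbr_bilin) !(opZl nbr_bilin) scalerBr opprD addrACA.
- have [a1 [b1 [A1 B1 ->]]] := AB_span x.
  have [a2 [b2 [A2 B2 ->]]] := AB_span y.
  have [a3 [b3 [A3 B3 ->]]] := AB_span z.
  rewrite scalerDr addrACA !gbrE ?A_comb ?B_comb //.
  by rewrite !(opDr nbr_bilin) !(opZr nbr_bilin) scalerBr opprD addrACA.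
Qed.

Lemma gbr_alternating x : gbr x x = 0.
Proof.
have [a [b [Aa Bb ->]]] := AB_span x.
by case: nbr_lie => _ nbr_alt _; rewrite gbrE // !nbr_alt subrr.
Qed.

Lemma gbr_gbr a1 a2 a3 b1 b2 b3 :
  a1 \in A -> a2 \in A -> a3 \in A -> b1 \in B -> b2 \in B -> b3 \in B ->
  gbr (a1 + b1) (gbr (a2 + b2) (a3 + b3))
    = nbr a1 (nbr a2 a3) + nbr b1 (nbr b2 b3).
Proof.
move=> A1 A2 A3 B1 B2 B3; have [_ _ Abr] := A_sub; have [_ _ Bbr] := B_sub.
by rewrite gbrE // gbrE ?Abr ?(subalgebraN B_sub) ?Bbr // (opNr nbr_bilin) opprK.
Qed.

Lemma gbr_jacobi x y z : gbr x (gbr y z) + gbr y (gbr z x) + gbr z (gbr x y) = 0.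
Proof.
have [a1 [b1 [A1 B1 ->]]] := AB_span x.
have [a2 [b2 [A2 B2 ->]]] := AB_span y.
have [a3 [b3 [A3 B3 ->]]] := AB_span z.
rewrite !gbr_gbr // (addrACA (nbr a1 _)) [LHS]addrACA.
by case: nbr_lie => _ _ jacobi; rewrite !jacobi addr0.
Qed.

Lemma gbr_lie : is_lie_bracket gbr.
Proof. by split; [exact: gbr_bilinear | exact: gbr_alternating | exact: gbr_jacobi]. Qed.

Lemma dot_bilinear : bilinear_op dot.
Proof.
split=> c x y z.
- have [a1 [b1 [A1 B1 ->]]] := AB_span x.
  have [a2 [b2 [A2 B2 ->]]] := AB_span y.
  rewrite scalerDr addrACA !dot_decl ?A_comb ?B_comb //.
  by rewrite (opDl nbr_bilin) (opZl nbr_bilin) opprD scalerN.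
- have [a1 [b1 [A1 B1 ->]]] := AB_span x.
  by rewrite !dot_decl // (opDr nbr_bilin) (opZr nbr_bilin) opprD scalerN.
Qed.

Lemma dot_anticomm x y : dot x y - dot y x = gbr x y - nbr x y.
Proof.
have [a1 [b1 [A1 B1 ->]]] := AB_span x.
have [a2 [b2 [A2 B2 ->]]] := AB_span y.
rewrite !dot_decl // gbrE // !(opDl nbr_bilin) !(opDr nbr_bilin).
rewrite (lie_anticomm nbr_lie b2 a1) (lie_anticomm nbr_lie b2 b1) !opprD !opprK.
rewrite [RHS]addrA (addrACA (nbr a1 a2)) subrr add0r [RHS]addrC.
by rewrite (addrC (nbr b2 b1) (nbr b2 a1)).
Qed.

Lemma dot_gbr x y z : dot (gbr x y) z = dot x (dot y z) - dot y (dot x z).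
Proof.
have [a1 [b1 [A1 B1 ->]]] := AB_span x.
have [a2 [b2 [A2 B2 ->]]] := AB_span y.
have [_ _ Abr] := A_sub; have [_ _ Bbr] := B_sub.
rewrite gbrE // !dot_decl ?Abr ?(subalgebraN B_sub) ?Bbr //.
by rewrite (opNl nbr_bilin) !(opNr nbr_bilin) !opprK (lie_ad_bracket nbr_lie).
Qed.

Lemma dot_nbr x y z : dot x (nbr y z) = nbr (dot x y) z + nbr y (dot x z).
Proof.
have [a [b [Aa Bb ->]]] := AB_span x.
rewrite !dot_decl // (opNl nbr_bilin) (opNr nbr_bilin) -opprD.
by rewrite (lie_derivation nbr_lie).
Qed.

Lemma post_lie : is_post_lie gbr nbr dot.
Proof.
by split; [exact: dot_bilinear | exact: dot_anticomm | exact: dot_gbr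
          | exact: dot_nbr].
Qed.

End SplitLieAlgebra.

Theorem proposition2p14 (k : fieldType) (V : lmodType k)
  (nbr : V -> V -> V) (A B : {pred V})
  (gbr dot : V -> V -> V) :
  is_lie_bracket nbr ->
  is_subalgebra nbr A -> is_subalgebra nbr B ->
  is_direct_sum A B ->
  (forall a a' b b' : V, a \in A -> a' \in A -> b \in B -> b' \in B ->
     gbr (a + b) (a' + b') = nbr a a' - nbr b b') ->
  (forall a a' b b' : V, a \in A -> a' \in A -> b \in B -> b' \in B ->
     dot (a + b) (a' + b') = - nbr b (a' + b')) ->
  is_lie_bracket gbr /\ is_post_lie gbr nbr dot.
Proof.
move=> nbr_lie A_sub B_sub [AB_span _] gbrE dotE.
by split; [exact: gbr_lie gbrE | exact: post_lie gbrE dotE].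
Qed.
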